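(* Let $p_1>p_2>\cdots>p_n$ be distinct positive integers. Enumerate the $\binom n2$ pairs $\{i,j\}$ with $p_i>p_j$ as $k=1,\dots,\binom n2$. For pair $k$, set $m_k=(p_i-p_j)/\gcd(p_i,p_j)$ and $A_k=\{0,\frac1{m_k},\dots,\frac{m_k-1}{m_k}\}$. Then the number of distinct sequences in $\{S_c(\mathbf p): c\in[0,1]\}$ equals $$1+\Big|\bigcup_{k=1}^{\binom n2}A_k\Big| \;=\;1+\sum_{k=1}^{\binom n2}(-1)^{k+1}\sum_{1\le i_1<\cdots<i_k\le\binom n2}\gcd(m_{i_1},\dots,m_{i_k}).$$
   Context: Stationary divisor method with cut point $c\in[0,1]$: seats are allocated one at a time. Initially each party $i$ has $a_i=0$ seats; each next seat goes to a party $i$ maximizing $p_i/(a_i+c)$, whose $a_i$ then increases by $1$. Ties are broken in favor of the smallest index. For $c=0$ the convention is that $p_i/0>p_j/0$ whenever $p_i>p_j$, and $p_i/0>p_j/k$ for every $k>0$. $S_c(\mathbf p)$ is the infinite sequence of indices of the parties receiving successive seats. *)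

From HB Require Import structures.
From mathcomp Require Import all_boot all_order all_algebra.
From mathcomp Require Import reals.
Set Implicit Arguments. Unset Strict Implicit. Unset Printing Implicit Defensive.
Import Order.TTheory GRing.Theory Num.Theory.
Local Open Scope ring_scope.

(* Parties are indexed 0..n-1 (0-based); p : nat -> nat gives their
   populations (only values below n matter); a : nat -> nat gives the
   current number of seats of each party. *)

(* [beats c p a i j]: party i has a strictly larger quotient
   p_i/(a_i+c) than party j, with the convention for a zero denominator:
   p_i/0 > p_j/0 iff p_i > p_j, and p_i/0 > p_j/k for every k > 0. *)
Definition beats {R : realType} (c : R) (p a : nat -> nat) (i j : nat) : bool :=
  let di := (a i)%:R + c in
  let dj := (a j)%:R + c in
  if di == 0 then (if dj == 0 then (p j < p i)%N else true)
  else if dj == 0 then false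
  else (p j)%:R / dj < (p i)%:R / di.

(* the party (among 0..n-1) maximizing the quotient, ties broken in favour
   of the smallest index *)
Definition winner {R : realType} (c : R) (p : nat -> nat) (n : nat)
    (a : nat -> nat) : nat :=
  foldl (fun b j => if beats c p a j b then j else b) 0%N (iota 0 n).

Fixpoint alloc {R : realType} (c : R) (p : nat -> nat) (n : nat) (t : nat)
    : nat -> nat :=
  match t with
  | 0 => fun _ => 0%N
  | t'.+1 =>
      let a := alloc c p n t' in
      let w := winner c p n a in
      fun i => if i == w then (a i).+1 else a i
  end.

Definition S_seq {R : realType} (c : R) (p : nat -> nat) (n : nat) : nat -> nat :=
  fun t => winner c p n (alloc c p n t).

Definition has_card {T : Type} (P : T -> Prop) (N : nat) : Prop :=
  exists f : 'I_N -> T, injective f /\ (forall s, P s <-> exists i, f i = s).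

(* the pairs (i,j), i<j<n, i.e. p_i > p_j (p decreasing), enumerated *)
Definition pairs (n : nat) : seq (nat * nat) :=
  [seq ij <- [seq (i, j) | i <- iota 0 n, j <- iota 0 n] | (ij.1 < ij.2)%N].

Definition mk (p : nat -> nat) (n k : nat) : nat :=
  let ij := nth (0%N, 0%N) (pairs n) k in
  ((p ij.1 - p ij.2) %/ gcdn (p ij.1) (p ij.2))%N.

Definition Ak (p : nat -> nat) (n k : nat) : seq rat :=
  [seq (r%:R / (mk p n k)%:R : rat) | r <- iota 0 (mk p n k)].

Definition A_union (p : nat -> nat) (n : nat) : seq rat :=
  undup (flatten [seq Ak p n k | k <- iota 0 'C(n, 2)]).

From HB Require Import structures.
From mathcomp Require Import all_boot all_order all_algebra.
From mathcomp Require Import reals ring lra zify.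
From Stdlib Require Import FunctionalExtensionality.
Import Order.TTheory GRing.Theory Num.Theory.
Local Open Scope ring_scope.
Set Implicit Arguments. Unset Strict Implicit. Unset Printing Implicit Defensive.

(* For [c >= 0], when [i] holds [k] seats and [j] holds [l], the smaller
   party [j] beats [i] exactly if [c (p_i - p_j) < p_j k - p_i l]. Hence [S_c] can only
   change when [c] crosses a critical value [(p_j k - p_i l) / (p_i - p_j)],
   and it does change there, because the [(k+1)]-st seat of [i] and the
   [(l+1)]-st seat of [j] are awarded in opposite orders on the two sides.
   The critical values in [(0, 1]] are the [1 - q], [q] in some [A_k], so
   [c |-> S_c] is a step function on [[0, 1]] with [|U A_k|] jumps. For the
   second formula, the [A_k] with [k] in [T] intersect in the grid of mesh
   [1 / gcd m_k], and inclusion-exclusion applies. *)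

Section Beats.
Variable R : realType.
Implicit Types (c : R) (p a : nat -> nat) (z : bool).

(* [beats] with its zero-denominator tests and quotients abstracted away, so
   that its order properties reduce to a finite case analysis. *)
Definition quot_gt (z1 z2 : bool) (n1 n2 : nat) (q1 q2 : R) : bool :=
  if z1 then (if z2 then (n2 < n1)%N else true) else if z2 then false else q2 < q1.

Lemma beats_quot_gt c p a i j : beats c p a i j =
  quot_gt ((a i)%:R + c == 0) ((a j)%:R + c == 0) (p i) (p j)
          ((p i)%:R / ((a i)%:R + c)) ((p j)%:R / ((a j)%:R + c)).
Proof. by []. Qed.

Lemma quot_gt_trans z1 z2 z3 n1 n2 n3 (q1 q2 q3 : R) :
  quot_gt z1 z2 n1 n2 q1 q2 -> quot_gt z2 z3 n2 n3 q2 q3 -> quot_gt z1 z3 n1 n3 q1 q3.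
Proof.
rewrite /quot_gt; case: z1; case: z2; case: z3 => // h1 h2.
- exact: ltn_trans h2 h1.
- exact: lt_trans h2 h1.
Qed.

Lemma quot_gt_ngt_trans z1 z2 z3 n1 n2 n3 (q1 q2 q3 : R) :
  quot_gt z1 z2 n1 n2 q1 q2 -> ~~ quot_gt z3 z2 n3 n2 q3 q2 ->
  quot_gt z1 z3 n1 n3 q1 q3.
Proof.
rewrite /quot_gt; case: z1; case: z2; case: z3 => //= h1;
  rewrite -?leqNgt -?leNgt => h2.
- exact: leq_ltn_trans h2 h1.
- exact: le_lt_trans h2 h1.
Qed.

Lemma quot_gt_asym z1 z2 n1 n2 (q1 q2 : R) :
  quot_gt z1 z2 n1 n2 q1 q2 -> ~~ quot_gt z2 z1 n2 n1 q2 q1.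
Proof.
rewrite /quot_gt; case: z1; case: z2 => //= h; rewrite -?leqNgt -?leNgt.
- exact: ltnW.
- exact: ltW.
Qed.

Lemma beats_trans c p a i j k : beats c p a i j -> beats c p a j k -> beats c p a i k.
Proof. rewrite !beats_quot_gt; exact: quot_gt_trans. Qed.

Lemma beats_nbeats_trans c p a i j k :
  beats c p a i j -> ~~ beats c p a k j -> beats c p a i k.
Proof. rewrite !beats_quot_gt; exact: quot_gt_ngt_trans. Qed.

Lemma beats_asym c p a i j : beats c p a i j -> ~~ beats c p a j i.
Proof. rewrite !beats_quot_gt; exact: quot_gt_asym. Qed.

Lemma beats_irr c p a i : beats c p a i i = false.
Proof. by apply/negP => /[dup] /beats_asym /negP. Qed.

Lemma beats_thresholdE c p a i j : 0 <= c -> (p j < p i)%N -> (0 < p j)%N ->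
  beats c p a j i = (c * ((p i)%:R - (p j)%:R) < (p j * a i)%:R - (p i * a j)%:R).
Proof.
move=> c0 pji pj0; rewrite /beats.
case: (ltgtP 0 c) c0 => // [cpos|<-] _.
  have dj : 0 < (a j)%:R + c by rewrite ltr_wpDl.
  have di : 0 < (a i)%:R + c by rewrite ltr_wpDl.
  rewrite !gt_eqF // ltr_pdivrMr // mulrAC ltr_pdivlMr //.
  rewrite -[LHS]subr_gt0 -[RHS]subr_gt0 !natrM; congr (0 < _); ring.
rewrite !addr0 !pnatr_eq0 mul0r.
case: (a j) => [|aj]; case: (a i) => [|ai] /=.
- by rewrite !muln0 subrr ltxx ltnNge ltnW.
- by rewrite muln0 subr0 ltr0n muln_gt0 pj0.
- by rewrite muln0 sub0r oppr_gt0 ltrn0.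
- rewrite ltr_pdivrMr ?ltr0Sn // mulrAC ltr_pdivlMr ?ltr0Sn //.
  rewrite -[LHS]subr_gt0 -[RHS]subr_gt0 !natrM; congr (0 < _); ring.
Qed.

End Beats.

Section Winner.
Variable R : realType.
Variables (c : R) (p a : nat -> nat).

Definition is_winner (n w : nat) : Prop :=
  [/\ (w < n)%N, forall i, (i < w)%N -> beats c p a w i
    & forall i, (w < i < n)%N -> ~~ beats c p a i w].

Lemma is_winner_foldl r w m : is_winner m w ->
  is_winner (m + r) (foldl (fun b j => if beats c p a j b then j else b) w (iota m r)).
Proof.
elim: r w m => [|r IH] w m; first by rewrite addn0.
move=> [wm earlier later] /=; rewrite -addSnnS; apply: IH.
case: ifP => [mw|nmw]; split.
- by [].
- move=> i im; have [iw|wi|->] := ltngtP i w; last exact: mw.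
    exact: beats_trans mw (earlier i iw).
  by apply: beats_nbeats_trans mw (later i _); rewrite wi.
- by move=> i /andP [mi]; rewrite ltnS leqNgt mi.
- exact: ltn_trans wm _.
- exact: earlier.
- move=> i /andP [wi]; rewrite ltnS leq_eqVlt => /predU1P [->|im]; first by rewrite nmw.
  by apply: later; rewrite wi.
Qed.

Lemma winnerP n : (0 < n)%N -> is_winner n (winner c p n a).
Proof.
case: n => // n _; rewrite /winner /= beats_irr -add1n.
apply: is_winner_foldl; split => // i; rewrite ltnS ?leqn0 //.
by case/andP => /[swap] /eqP ->.
Qed.

Lemma is_winner_uniq n w1 w2 : is_winner n w1 -> is_winner n w2 -> w1 = w2.
Proof.
move=> [w1n earlier1 later1] [w2n earlier2 later2].
have [lt12|lt21|//] := ltngtP w1 w2.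
  by move: (later1 w2); rewrite lt12 w2n (earlier2 _ lt12) => /(_ isT).
by move: (later2 w1); rewrite lt21 w1n (earlier1 _ lt21) => /(_ isT).
Qed.

Lemma winner_lt n : (0 < n)%N -> (winner c p n a < n)%N.
Proof. by case/winnerP. Qed.

Lemma winner_beats_earlier n i : (i < winner c p n a < n)%N ->
  beats c p a (winner c p n a) i.
Proof. by case/andP => iw /(leq_ltn_trans (leq0n _)) /winnerP [_ /(_ i iw)]. Qed.

Lemma winner_nbeats n i : (i < n)%N -> ~~ beats c p a i (winner c p n a).
Proof.
move=> iN; have [wn earlier later] := winnerP (leq_ltn_trans (leq0n i) iN).
have [iw|wi|->] := ltngtP i (winner c p n a); last by rewrite beats_irr.
  exact: beats_asym (earlier i iw).
by apply: later; rewrite wi iN.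
Qed.

End Winner.

(* [is_winner] only involves a later party beating an earlier one. *)
Lemma winner_eq (R : realType) (c1 c2 : R) p a n :
  (forall i j, (i < j < n)%N -> beats c1 p a j i = beats c2 p a j i) ->
  winner c1 p n a = winner c2 p n a.
Proof.
case: n => [|n] same; first by [].
apply: (@is_winner_uniq _ c1 p a n.+1); first exact: winnerP.
have [wn earlier later] := winnerP c2 p a (ltn0Sn n).
split=> // [i iw|i /andP [wi iN]]; rewrite same ?earlier ?later ?iw ?wi //=.
Qed.

Section Allocation.
Variable R : realType.
Variables (p : nat -> nat) (n : nat).
Implicit Types (c : R) (t : nat).

Lemma allocS c t i :
  alloc c p n t.+1 i = (alloc c p n t i + (i == S_seq c p n t))%N.
Proof. by rewrite /= /S_seq; case: eqP; rewrite ?addn1 ?addn0. Qed.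

Lemma leq_alloc c t1 t2 i : (t1 <= t2)%N -> (alloc c p n t1 i <= alloc c p n t2 i)%N.
Proof.
elim: t2 => [|t2 IH]; first by rewrite leqn0 => /eqP ->.
rewrite leq_eqVlt => /predU1P [-> //|]; rewrite ltnS => /IH le_t1.
by rewrite allocS (leq_trans le_t1) ?leq_addr.
Qed.

Lemma alloc_eq_S_seq c1 c2 t : S_seq c1 p n = S_seq c2 p n ->
  alloc c1 p n t = alloc c2 p n t.
Proof.
move=> eqS; apply: functional_extensionality.
by elim: t => [//|t IH] i; rewrite !allocS IH eqS.
Qed.

Lemma S_seq_eq c1 c2 :
  (forall a i j, (i < j < n)%N -> beats c1 p a j i = beats c2 p a j i) ->
  S_seq c1 p n = S_seq c2 p n.
Proof.
move=> same; have eq_alloc t : alloc c1 p n t = alloc c2 p n t.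
  by elim: t => [//|t IH] /=; rewrite IH (winner_eq (same _)).
by apply: functional_extensionality => t; rewrite /S_seq eq_alloc (winner_eq (same _)).
Qed.

Lemma sum_alloc c t : (0 < n)%N -> (\sum_(i < n) alloc c p n t i)%N = t.
Proof.
move=> n0; elim: t => [|t IH]; first by rewrite big1.
under eq_bigr do rewrite allocS.
rewrite big_split /= IH (bigD1 (Ordinal (winner_lt c p (alloc c p n t) n0))) //=.
rewrite eqxx big1 ?addn0 ?addn1 // => j neq_j.
by apply/eqP; rewrite eqb0; apply: contra neq_j => /eqP eq_j; apply/eqP/val_inj.
Qed.

Lemma alloc_le_of_nbeats c a i w K : 0 <= c <= 1 -> (0 < p i)%N ->
  (a i <= K)%N -> ~~ beats c p a i w -> (a w <= p w * K.+1)%N.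
Proof.
move=> /andP [c0 c1] pi0 aiK; rewrite /beats.
have den0 m : ((m%:R + c == 0) = (m == 0%N) && (c == 0)).
  by rewrite paddr_eq0 ?pnatr_eq0.
case: ifP => [_|ni0]; first by case: ifP => //; rewrite den0 => /andP [/eqP ->].
case: ifP => [|nw0]; first by rewrite den0 => /andP [/eqP ->].
have di : 0 < (a i)%:R + c by rewrite lt_neqAle eq_sym ni0 addr_ge0.
have dw : 0 < (a w)%:R + c by rewrite lt_neqAle eq_sym nw0 addr_ge0.
rewrite -leNgt ler_pdivrMr // mulrAC ler_pdivlMr // => quot_le.
rewrite -(ler_nat R) natrM -natr1.
have le_aw : (a w)%:R <= (p i)%:R * ((a w)%:R + c) :> R.
  rewrite mulrDr -[X in X <= _]addr0 lerD ?mulr_ge0 //.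
  by rewrite ler_peMl // ler1n.
apply: (le_trans le_aw); apply: (le_trans quot_le).
by rewrite ler_wpM2l // lerD // ler_nat.
Qed.

Hypothesis hpos : forall i, (i < n)%N -> (0 < p i)%N.

(* While [i] holds at most [K] seats, a seat only goes to a party [w] that
   [i] does not beat, which then holds at most [p_w (K + 1) < B] seats; so no
   party exceeds [B] seats, although [n B + 1] seats are handed out. *)
Lemma alloc_unbounded c i K : 0 <= c <= 1 -> (i < n)%N ->
  exists t, (K < alloc c p n t i)%N.
Proof.
move=> c01 iN; have n0 : (0 < n)%N by apply: leq_ltn_trans iN.
pose B := (((\sum_(j < n) p j) * K.+1).+1)%N.
exists (n * B).+1; rewrite ltnNge; apply/negP => le_K.
have le_B t : (t <= (n * B).+1)%N -> forall j, (j < n)%N -> (alloc c p n t j <= B)%N.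
  elim: t => [|t IH] tT j jn; first exact: leq0n.
  rewrite allocS.
  case: eqP => [->|_]; last by rewrite addn0 IH // ltnW.
  have wn := winner_lt c p (alloc c p n t) n0.
  have aiK : (alloc c p n t i <= K)%N.
    by apply: leq_trans le_K; apply: leq_alloc; apply: ltnW.
  have := alloc_le_of_nbeats c01 (hpos iN) aiK (winner_nbeats _ _ _ iN).
  rewrite addn1 ltnS => /leq_trans; apply.
  by rewrite leq_mul2r (bigD1 (Ordinal wn)) //= leq_addr.
have : (\sum_(j < n) alloc c p n (n * B).+1 j <= \sum_(j < n) B)%N.
  by apply: leq_sum => j _; apply: le_B.
by rewrite sum_alloc // sum_nat_const card_ord ltnn.
Qed.

Lemma alloc_gt_award c i K t : (K < alloc c p n t i)%N ->
  exists t', [/\ alloc c p n t' i = K, S_seq c p n t' = i & (t' < t)%N].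
Proof.
elim: t => [//|t IH]; rewrite allocS.
have [lt_K|le_K] := ltnP K (alloc c p n t i).
  by have [t' [? ? /ltnW ?]] := IH lt_K; exists t'.
case: eqP => [iS|_]; rewrite ?addn1 ?addn0 => lt_K.
  by exists t; split => //; apply/eqP; rewrite eqn_leq le_K.
by move: (leq_trans lt_K le_K); rewrite ltnn.
Qed.

End Allocation.

(* Writing [g = gcd P Q], every [Q k - P l] is a multiple of [g] and, by
   Bezout, every natural multiple of [g] is such a difference; since
   [P - Q = m g], the thresholds in [(0, 1]] are the [r / m], [0 < r <= m]. *)
Lemma pair_thresholdP (R : realType) (P Q : nat) (t : R) : (0 < Q < P)%N -> 0 < t <= 1 ->
  (exists k l, t * (P%:R - Q%:R) = (Q * k)%:R - (P * l)%:R) <->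
  exists2 s, (s < (P - Q) %/ gcdn P Q)%N & t = 1 - s%:R / ((P - Q) %/ gcdn P Q)%:R.
Proof.
move=> /andP [Q0 QP] /andP [t0 t1].
set g := gcdn P Q; set m := ((P - Q) %/ g)%N.
have g0 : (0 < g)%N by rewrite gcdn_gt0 Q0 orbT.
have gR0 : 0 < g%:R :> R by rewrite ltr0n.
have PQ : P%:R - Q%:R = m%:R * g%:R :> R.
  by rewrite -natrB ?(ltnW QP) // -natrM divnK // dvdn_sub ?dvdn_gcdl ?dvdn_gcdr.
have m0 : 0 < m%:R :> R.
  by rewrite -(pmulr_lgt0 _ gR0) -PQ subr_gt0 ltr_nat.
split=> [[k [l eq_t]]|[s sm ->]].
  set u := (Q %/ g * k)%N; set v := (P %/ g * l)%N.
  have Qk : (Q * k)%:R = u%:R * g%:R :> R by rewrite -natrM mulnAC divnK ?dvdn_gcdr.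
  have Pl : (P * l)%:R = v%:R * g%:R :> R by rewrite -natrM mulnAC divnK ?dvdn_gcdl.
  have tm : t * m%:R = u%:R - v%:R.
    by apply: (mulIf (lt0r_neq0 gR0)); rewrite -mulrA -PQ eq_t Qk Pl mulrBl.
  have vu : (v < u)%N by rewrite -(ltr_nat R) -subr_gt0 -tm mulr_gt0.
  have um : (u - v <= m)%N.
    by rewrite -(ler_nat R) natrB ?(ltnW vu) // -tm ler_piMl // ltW.
  exists (m - (u - v))%N.
    by rewrite ltn_subrL subn_gt0 vu (leq_trans _ um) // subn_gt0.
  rewrite natrB // natrB ?(ltnW vu) // -tm mulrBl divff ?lt0r_neq0 //.
  by rewrite mulfK ?lt0r_neq0 // opprB addrC subrK.
have [km kn bezout _] := egcdnP P Q0; rewrite gcdnC -/g in bezout.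
exists (km * (m - s))%N, (kn * (m - s))%N.
rewrite !mulnA -[(Q * km)%N]mulnC bezout [(P * kn)%N]mulnC !natrM natrD PQ.
rewrite natrB ?(ltnW sm) // natrM.
by field; rewrite lt0r_neq0.
Qed.

Lemma mem_pairs n ij : (ij \in pairs n) = (ij.1 < ij.2 < n)%N.
Proof.
case: ij => i j; rewrite /pairs mem_filter /=; apply/andP/idP => [[ij]|/andP [ij jn]].
  case/allpairsP => -[x y] /= [_ yn [_ eq_j]].
  by rewrite ij eq_j; move: yn; rewrite mem_iota.
rewrite ij; split=> //; apply/allpairsP; exists (i, j).
by rewrite !mem_iota /= jn (ltn_trans ij).
Qed.

Lemma size_pairs n : size (pairs n) = 'C(n, 2).
Proof.
rewrite /pairs size_filter /allpairs count_flatten -map_comp.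
have count_gt i : count (fun j => (i < j)%N) (iota 0 n) = (n - i.+1)%N.
  by elim: n => [//|n IH]; rewrite -[n.+1]addn1 iotaD count_cat IH /=; lia.
rewrite (eq_map (fun i => count_map _ _ _)) (eq_map count_gt) sumnE big_map.
rewrite -bin2_sum -{1}(subn0 n) -/(index_iota 0 n) big_nat_rev /=.
by rewrite big_nat_cond [RHS]big_nat_cond; apply: eq_bigr => i /andP [/andP [_ ?] _]; lia.
Qed.

Lemma nth_pairs n k : (k < 'C(n, 2))%N ->
  ((nth (0, 0) (pairs n) k).1 < (nth (0, 0) (pairs n) k).2 < n)%N.
Proof. by move=> kn; rewrite -mem_pairs mem_nth ?size_pairs. Qed.

Section IntegerMultiples.
Variable R : archiNumDomainType.
Implicit Types (x : R).

Lemma mulr_nat_int_dvdn x a b : (a %| b)%N ->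
  x * a%:R \is a Num.int -> x * b%:R \is a Num.int.
Proof. by case/dvdnP => d ->; rewrite natrM mulrCA => xa; rewrite rpredM ?natr_int. Qed.

Lemma mulr_nat_int_gcdn x a b : x * a%:R \is a Num.int -> x * b%:R \is a Num.int ->
  x * (gcdn a b)%:R \is a Num.int.
Proof.
case: a => [|a] xa xb; first by rewrite gcd0n.
have [km kn bezout _] := egcdnP b (ltn0Sn a).
have -> : (gcdn a.+1 b)%:R = km%:R * a.+1%:R - kn%:R * b%:R :> R.
  by rewrite -!natrM bezout natrD addrAC subrr add0r.
rewrite mulrBr [x * (km%:R * _)]mulrCA [x * (kn%:R * _)]mulrCA.
by apply: rpredB; apply: rpredM; rewrite ?natr_int.
Qed.

Lemma mulr_nat_int_biggcdn x (I : finType) (P : pred I) (m : I -> nat) :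
  (forall k, P k -> x * (m k)%:R \is a Num.int) ->
  x * (\big[gcdn/0%N]_(k | P k) m k)%:R \is a Num.int.
Proof.
move=> xm; apply: (big_ind (fun g => x * g%:R \is a Num.int)) => //.
- by rewrite mulr0.
- exact: mulr_nat_int_gcdn.
Qed.

End IntegerMultiples.

Definition grid (m : nat) : seq rat := [seq r%:R / m%:R | r <- iota 0 m].

Lemma mem_grid m q : q \in grid m <-> exists2 s, (s < m)%N & q = s%:R / m%:R.
Proof.
split=> [/mapP [s]|[s sm ->]]; rewrite ?mem_iota /=; first by exists s.
by apply: map_f; rewrite mem_iota.
Qed.

Lemma uniq_grid m : uniq (grid m).
Proof.
case: m => [//|m]; rewrite map_inj_uniq ?iota_uniq // => r1 r2 /mulIf.
by rewrite invr_eq0 pnatr_eq0 => /(_ isT) /eqP; rewrite eqr_nat => /eqP.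
Qed.

Lemma mem_grid_int m q : (0 < m)%N ->
  q \in grid m <-> 0 <= q < 1 /\ q * m%:R \is a Num.int.
Proof.
move=> m0; have mq0 : 0 < m%:R :> rat by rewrite ltr0n.
split=> [/mem_grid [s sm ->]|[/andP [q0 q1] qm]].
  split; first by rewrite divr_ge0 //= ltr_pdivrMr // mul1r ltr_nat.
  by rewrite divfK ?lt0r_neq0 // natr_int.
have /natrP [s qmE] : q * m%:R \is a Num.nat by rewrite natrEint qm mulr_ge0.
apply/mem_grid; exists s; last by rewrite -qmE mulfK ?lt0r_neq0.
by rewrite -(ltr_nat rat) -qmE gtr_pMl.
Qed.

Lemma bigcap_grid (I : finType) (A : {set I}) (m : I -> nat) q :
  A != set0 -> (forall k, k \in A -> (0 < m k)%N) ->
  [forall k in A, q \in grid (m k)] = (q \in grid (\big[gcdn/0%N]_(k in A) m k)).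
Proof.
case/set0Pn => k0 k0A m_gt0; set g := \big[gcdn/0%N]_(k in A) m k.
have g_dvd k : k \in A -> (g %| m k)%N by move=> kA; apply: biggcdn_inf kA (dvdnn _).
have g0 : (0 < g)%N.
  by rewrite lt0n; apply: contraTneq (g_dvd k0 k0A) => ->; rewrite dvd0n -lt0n m_gt0.
apply/forall_inP/idP => [q_in|/(mem_grid_int _ g0) [q01 qg] k kA].
  apply/(mem_grid_int _ g0); split; first by case/(mem_grid_int _ (m_gt0 _ k0A)): (q_in _ k0A).
  apply: mulr_nat_int_biggcdn => k kA.
  by case/(mem_grid_int _ (m_gt0 _ kA)): (q_in _ kA).
apply/(mem_grid_int _ (m_gt0 _ kA)); split=> //.
exact: mulr_nat_int_dvdn (g_dvd k kA) qg.
Qed.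

Lemma mem_A_union p n q :
  q \in A_union p n <-> exists2 k, (k < 'C(n, 2))%N & q \in grid (mk p n k).
Proof.
rewrite mem_undup; split=> [/flatten_mapP [k]|[k kn qk]].
  by rewrite mem_iota => kn qk; exists k.
by apply/flatten_mapP; exists k; rewrite ?mem_iota.
Qed.

Section Thresholds.
Variable R : realType.
Variables (p : nat -> nat) (n : nat).
Hypothesis hpos : forall i, (i < n)%N -> (0 < p i)%N.
Hypothesis hdec : forall i j, (i < j)%N -> (j < n)%N -> (p j < p i)%N.

Definition critical (c : R) : Prop := exists i j k l, (i < j < n)%N /\
  c * ((p i)%:R - (p j)%:R) = (p j * k)%:R - (p i * l)%:R.

Definition thresholds : seq R := [seq ratr (1 - q) | q <- A_union p n].

Lemma uniq_thresholds : uniq thresholds.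
Proof.
rewrite map_inj_uniq ?undup_uniq // => q1 q2 /fmorph_inj.
by move/addrI/oppr_inj.
Qed.

Lemma ratr_1_sub_frac (s m : nat) : ratr (1 - s%:R / m%:R) = 1 - s%:R / m%:R :> R.
Proof. by rewrite rmorphB rmorph1 fmorph_div !rmorph_nat. Qed.

Lemma mem_thresholdsE t : t \in thresholds <->
  exists i j, (i < j < n)%N /\
  let m := ((p i - p j) %/ gcdn (p i) (p j))%N in exists2 s, (s < m)%N & t = 1 - s%:R / m%:R.
Proof.
split=> [/mapP [q /mem_A_union [k kn /mem_grid [s sm ->]] ->]|[i [j [ijn [s sm ->]]]]].
  exists (nth (0, 0) (pairs n) k).1, (nth (0, 0) (pairs n) k).2.
  by split; [exact: nth_pairs|exists s; rewrite // ratr_1_sub_frac].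
have ijP : (i, j) \in pairs n by rewrite mem_pairs.
apply/mapP; exists (s%:R / ((p i - p j) %/ gcdn (p i) (p j))%:R); last first.
  by rewrite ratr_1_sub_frac.
apply/mem_A_union; exists (index (i, j) (pairs n)); first by rewrite -size_pairs index_mem.
by rewrite /mk nth_index //; apply/mem_grid; exists s.
Qed.

Lemma thresholds_in01 t : t \in thresholds -> 0 < t <= 1.
Proof.
case/mem_thresholdsE => i [j [_ [s sm ->]]].
rewrite subr_gt0 ltr_pdivrMr ?ltr0n ?(leq_ltn_trans _ sm) // mul1r ltr_nat sm /=.
by rewrite lerBlDr lerDl divr_ge0.
Qed.

Lemma mem_thresholds t : 0 < t <= 1 -> t \in thresholds <-> critical t.
Proof.
move=> t01; have pair_pos i j : (i < j < n)%N -> (0 < p j < p i)%N.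
  by case/andP => ij jn; rewrite hpos ?hdec.
rewrite mem_thresholdsE; split=> [[i [j [ijn tE]]]|[i [j [k [l [ijn tE]]]]]].
  have [k [l ?]] := (pair_thresholdP (pair_pos _ _ ijn) t01).2 tE.
  by exists i, j, k, l.
by exists i, j; split; last by apply/(pair_thresholdP (pair_pos _ _ ijn) t01); exists k, l.
Qed.

(* The [(k+1)]-st seat of [i] and the [(l+1)]-st seat of [j] are awarded
   in one order under [c1] and in the other order under [c2]. *)
Lemma S_seq_neq (c1 c2 : R) i j k l : 0 <= c1 <= 1 -> 0 <= c2 ->
  (i < j < n)%N ->
  c1 * ((p i)%:R - (p j)%:R) < (p j * k)%:R - (p i * l)%:R ->
  (p j * k)%:R - (p i * l)%:R <= c2 * ((p i)%:R - (p j)%:R) ->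
  S_seq c1 p n <> S_seq c2 p n.
Proof.
move=> c01 c20 /andP [ij jn] below1 above2 eqS.
have iN := ltn_trans ij jn; have pji := hdec ij jn; have pj0 := hpos jn.
have c10 : 0 <= c1 by case/andP: c01.
have [t1 /alloc_gt_award [ti [ai Si _]]] := alloc_unbounded hpos k c01 iN.
have [t2 /alloc_gt_award [tj [aj Sj _]]] := alloc_unbounded hpos l c01 jn.
have l_lt : (l < alloc c1 p n ti j)%N.
  have := winner_nbeats c1 p (alloc c1 p n ti) jn.
  rewrite -/(S_seq c1 p n ti) Si beats_thresholdE // ai -leNgt => /(le_lt_trans)/(_ below1).
  by rewrite ltrD2l ltrN2 ltr_nat ltn_pmul2l // (ltn_trans pj0).
have k_lt : (k < alloc c1 p n tj i)%N.
  have := @winner_beats_earlier R c2 p (alloc c2 p n tj) n i.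
  rewrite -/(S_seq c2 p n tj) -eqS Sj ij jn beats_thresholdE // -(alloc_eq_S_seq _ eqS) aj.
  move=> /(_ isT) /(le_lt_trans above2).
  by rewrite ltrD2r ltr_nat ltn_pmul2l.
have ti_lt : (ti < tj)%N.
  by rewrite ltnNge; apply: contraL k_lt => /(leq_alloc p n c1 i); rewrite ai -ltnNge.
have tj_lt : (tj < ti)%N.
  by rewrite ltnNge; apply: contraL l_lt => /(leq_alloc p n c1 j); rewrite aj -ltnNge.
by move: (ltn_trans ti_lt tj_lt); rewrite ltnn.
Qed.

Lemma S_seq_eq_iff (c1 c2 : R) : 0 <= c1 -> c1 <= c2 -> c2 <= 1 ->
  S_seq c1 p n = S_seq c2 p n <-> ~~ has (fun b => c1 < b <= c2) thresholds.
Proof.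
move=> c10 c12 c21; split=> [eqS|].
  apply/hasPn => b /[dup] /thresholds_in01 b01 /(mem_thresholds b01).
  move=> [i [j [k [l [ijn bE]]]]]; apply/negP => /andP [c1b bc2].
  have M0 : 0 < (p i)%:R - (p j)%:R :> R.
    by case/andP: ijn => ij jn; rewrite subr_gt0 ltr_nat hdec.
  have c101 : 0 <= c1 <= 1 by rewrite c10 (le_trans c12).
  by apply: (S_seq_neq (k := k) (l := l) c101 (le_trans c10 c12) ijn _ _ eqS);
    rewrite -bE ?ltr_pM2r ?ler_pM2r.
move=> /hasPn no_thr; apply: S_seq_eq => a i j /[dup] ijn /andP [ij jn].
have pj0 := hpos jn; have pji := hdec ij jn.
have M0 : 0 < (p i)%:R - (p j)%:R :> R by rewrite subr_gt0 ltr_nat.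
rewrite !beats_thresholdE ?(le_trans c10 c12) //.
set M := _ - _; set D := _ - _.
apply/idP/idP => [below1|]; last by apply: le_lt_trans; rewrite ler_pM2r.
rewrite ltNge; apply/negP => above2.
have thr : D / M \in thresholds.
  apply/mem_thresholds; last by exists i, j, (a i), (a j); rewrite divfK ?lt0r_neq0.
  have D0 : 0 < D by rewrite (le_lt_trans _ below1) // mulr_ge0 // ltW.
  rewrite divr_gt0 //= ler_pdivrMr // mul1r (le_trans above2) //.
  by rewrite ler_piMl // ltW.
have := no_thr _ thr.
by rewrite ltr_pdivlMr // ler_pdivrMr // below1 above2.
Qed.

End Thresholds.

Section StepFunction.
Variables (R : realDomainType) (T : Type) (f : R -> T) (bs : seq R).
Hypothesis bs_uniq : uniq bs.
Hypothesis bs01 : forall b, b \in bs -> 0 < b <= 1.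
Hypothesis f_eq : forall c1 c2, 0 <= c1 -> c1 <= c2 -> c2 <= 1 ->
  f c1 = f c2 <-> ~~ has (fun b => c1 < b <= c2) bs.

Lemma count_le_nth_sorted (s : seq R) r : sorted <%O s -> (r < size s)%N ->
  count (fun b => b <= nth 0 s r) s = r.+1.
Proof.
elim: s r => [//|x s IH] r /= xs; have s_sorted := path_sorted xs.
have gt_x : all (fun y => x < y) s by apply: order_path_min xs; exact: lt_trans.
case: r => [_|r] /=; last by rewrite ltnS => rs; rewrite IH // ltW // (allP gt_x) ?mem_nth.
rewrite lexx add1n; congr _.+1; apply/eqP; rewrite -leqn0 leqNgt -has_count.
by apply/hasPn => y /(allP gt_x); rewrite ltNge.
Qed.

Let rank c := count (fun b => b <= c) bs.

Lemma f_eq_rank c1 c2 : 0 <= c1 <= 1 -> 0 <= c2 <= 1 -> f c1 = f c2 <-> rank c1 = rank c2.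
Proof.
wlog c12 : c1 c2 / c1 <= c2.
  move=> W c1_01 c2_01; have [/W|/ltW/W] := leP c1 c2; first exact.
  by move=> /(_ c2_01 c1_01) [h1 h2]; split=> /esym ?; [exact/esym/h1 | exact/esym/h2].
move=> /andP [c10 _] /andP [_ c21].
have rank_c2 : rank c2 = addn (rank c1) (count (fun b => c1 < b <= c2) bs).
  rewrite /rank -count_predUI.
  have -> : count (predI (fun b : R => b <= c1) (fun b => c1 < b <= c2)) bs = 0%N.
    by apply/eqP; rewrite -leqn0 leqNgt -has_count; apply/hasPn => b _ /=; case: leP.
  by rewrite addn0; apply: eq_count => b /=; case: leP => //= /le_trans ->.
rewrite f_eq // rank_c2 has_count -leqNgt leqn0.
by split=> [/eqP ->|/eqP]; rewrite ?addn0 // -{1}[rank c1]addn0 eqn_add2l eq_sym.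
Qed.

Let sorted_bs := sort <=%O bs.

(* [point r] is the least [c >= 0] of rank [r]. *)
Let point r : R := if r is r'.+1 then nth 0 sorted_bs r' else 0.

Lemma point_in01 r : (r <= size bs)%N -> 0 <= point r <= 1.
Proof.
case: r => [|r] rs /=; first by rewrite lexx ler01.
have /bs01 /andP [b0 b1] : nth 0 sorted_bs r \in bs.
  by rewrite -(mem_sort <=%O) mem_nth ?size_sort.
by rewrite ltW.
Qed.

Lemma rank_point r : (r <= size bs)%N -> rank (point r) = r.
Proof.
case: r => [|r] rs /=.
  apply/eqP; rewrite -leqn0 leqNgt -has_count.
  by apply/hasPn => b /bs01 /andP [b0 _]; rewrite -ltNge.
rewrite /rank -(permP (permEl (perm_sort <=%O bs))) count_le_nth_sorted ?size_sort //.
by rewrite sort_lt_sorted.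
Qed.

Lemma has_card_step :
  has_card (fun s => exists c : R, 0 <= c <= 1 /\ s = f c) (1 + size bs).
Proof.
have ord_le (r : 'I_(1 + size bs)) : (r <= size bs)%N by case: r.
exists (fun r => f (point r)); split=> [r1 r2 /f_eq_rank eq_f|s].
  apply: val_inj.
  have := eq_f (point_in01 (ord_le r1)) (point_in01 (ord_le r2)).
  by rewrite !rank_point ?ord_le.
split=> [[c [c01 ->]]|[r <-]]; last by exists (point r); rewrite point_in01.
have rank_le : (rank c <= size bs)%N by apply: count_size.
exists (Ordinal (rank_le : (rank c < 1 + size bs)%N)).
by apply/(f_eq_rank (point_in01 rank_le) c01); rewrite rank_point.
Qed.

End StepFunction.

Lemma incl_excl_indicator (R : comPzRingType) K (f : 'I_K -> bool) : [exists k, f k] ->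
  \sum_(I : {set 'I_K} | I != set0) (-1) ^+ #|I|.+1 * \prod_(k in I) (f k)%:R = 1 :> R.
Proof.
case/existsP => k0 fk0.
have : \prod_(k < K) (1 - (f k)%:R) = 0 :> R by rewrite (bigD1 k0) //= fk0 subrr mul0r.
rewrite (eq_bigr (fun k => - (f k)%:R + 1)) => [|k _]; last by rewrite addrC.
rewrite bigA_distr (bigD1 set0) //= -big_mkcond big_set0.
under eq_bigr do rewrite -big_mkcond /= prodrN.
move=> /eqP; rewrite addrC addr_eq0 => /eqP sum_odd.
under eq_bigr do rewrite exprS mulN1r mulNr.
by rewrite sumrN sum_odd opprK.
Qed.

Lemma count_incl_excl (T : eqType) K (s : seq T) (P : 'I_K -> pred T) :
  (forall x, x \in s -> exists k, P k x) ->
  (size s)%:Z = \sum_(I : {set 'I_K} | I != set0)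
                  (-1) ^+ #|I|.+1 * (count (fun x => [forall k in I, P k x]) s)%:Z.
Proof.
move=> covered.
have sum_indicator (b : pred T) : \sum_(x <- s) (b x)%:R = (count b s)%:R :> int.
  by elim: s {covered} => [|x s IH]; rewrite ?big_nil // big_cons IH /= natrD.
rewrite -sum1_size -natz natr_sum.
rewrite (eq_big_seq (fun x => \sum_(I : {set 'I_K} | I != set0)
            (-1) ^+ #|I|.+1 * \prod_(k in I) (P k x)%:R)); last first.
  by move=> x /covered [k Pk]; rewrite incl_excl_indicator //; apply/existsP; exists k.
rewrite exchange_big; apply: eq_bigr => I _; rewrite -natz -mulr_sumr -sum_indicator.
congr (_ * _); apply: eq_bigr => x _.
case: (boolP [forall k in I, P k x]) => [/forall_inP all_P|/forall_inPn [k kI nPk]].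
  by rewrite big1 // => k /all_P ->.
by rewrite (bigD1 k) //= (negPf nPk) mul0r.
Qed.

Section InclusionExclusion.
Variables (p : nat -> nat) (n : nat).
Hypothesis hpos : forall i, (i < n)%N -> (0 < p i)%N.
Hypothesis hdec : forall i j, (i < j)%N -> (j < n)%N -> (p j < p i)%N.

Lemma mk_gt0 k : (k < 'C(n, 2))%N -> (0 < mk p n k)%N.
Proof.
move=> /nth_pairs; rewrite /mk; case: nth => i j /= /andP [ij jn].
have pji := hdec ij jn.
have gcd0 : (0 < gcdn (p i) (p j))%N by rewrite gcdn_gt0 (hpos jn) orbT.
by rewrite divn_gt0 // dvdn_leq ?subn_gt0 // dvdn_sub ?dvdn_gcdl ?dvdn_gcdr.
Qed.

Lemma count_A_union_bigcap (I : {set 'I_('C(n, 2))}) : I != set0 ->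
  count (fun q => [forall k in I, q \in grid (mk p n k)]) (A_union p n) =
  \big[gcdn/0%N]_(k in I) mk p n k.
Proof.
move=> /[dup] /set0Pn [k0 k0I] I0.
have mk0 k : k \in I -> (0 < mk p n k)%N by move=> _; apply: mk_gt0.
transitivity (size (grid (\big[gcdn/0%N]_(k in I) mk p n k))); last first.
  by rewrite size_map size_iota.
rewrite -size_filter; apply/perm_size/uniq_perm => [||q].
- by rewrite filter_uniq ?undup_uniq.
- exact: uniq_grid.
- rewrite mem_filter bigcap_grid //; apply/andP/idP => [[] //|qg]; split=> //.
  apply/mem_A_union; exists k0 => //.
  by move: qg; rewrite -bigcap_grid // => /forall_inP; apply.
Qed.

Lemma size_A_union_incl_excl : (size (A_union p n))%:Z =
  \sum_(I : {set 'I_('C(n, 2))} | I != set0)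
    (-1) ^+ #|I|.+1 * (\big[gcdn/0%N]_(k in I) mk p n k)%:Z.
Proof.
rewrite (@count_incl_excl _ _ _ (fun (k : 'I_('C(n, 2))) q => q \in grid (mk p n k))).
  by apply: eq_bigr => I I0; rewrite count_A_union_bigcap.
by move=> q /mem_A_union [k kn qk]; exists (Ordinal kn).
Qed.

End InclusionExclusion.

Theorem mainTheorem18 (R : realType) (n : nat) (p : nat -> nat)
  (hpos : forall i, (i < n)%N -> (0 < p i)%N)
  (hdec : forall i j, (i < j)%N -> (j < n)%N -> (p j < p i)%N) :
  has_card (fun s : nat -> nat =>
              exists c : R, 0 <= c <= 1 /\ s = S_seq c p n)
           (1 + size (A_union p n))%N
  /\
  ((1 + size (A_union p n))%N%:Z =
     1 + \sum_(T : {set 'I_('C(n, 2))} | T != set0)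
           (-1) ^+ (#|T|.+1) * ((\big[gcdn/0%N]_(k in T) mk p n k)%:Z)).
Proof.
split; last by rewrite PoszD size_A_union_incl_excl.
rewrite -(size_map (fun q => ratr (1 - q) : R)).
apply: has_card_step.
- exact: uniq_thresholds.
- exact: thresholds_in01.
- exact: S_seq_eq_iff.
Qed.
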